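(* Consider the system and safe set $\mathcal{C}=\{x: h(x)\ge 0\}$ described in the context. Suppose that: (i) Assumptions A, B$'$ and C$'$ (see context) hold; (ii) there exist positive constants $\gamma,\epsilon_1,\epsilon_2,\gamma_\theta,\gamma_\lambda>0$ such that for every $x\in\mathcal{C}$ the set $$K_{BF}^g(x)=\{\mathfrak{u}\in\mathbb{R}:\Psi_0(x)+\Psi_1(x)\mathfrak{u}\geq0\}$$ is non-empty, where $\Psi_0=\mathcal{M}+h_{x_2}f_\theta^0-(\epsilon_1+\epsilon_2)+\gamma\big(h-\frac{\bar\mu^2}{2\gamma_\theta}-\frac{\bar\nu^2}{2\gamma_\lambda}\big)$ and $\Psi_1=h_{x_2}(g+g_\lambda^0)h_{x_2}^\top$; (iii) the scalar estimates $\hat\mu,\hat\nu$ evolve according to $$\dot{\hat\mu}=-\gamma\hat\mu+\gamma_\theta\|h_{x_2}\|\|\Omega_\varphi\|,\qquad \dot{\hat\nu}=-\gamma\hat\nu+\gamma_\lambda\|h_{x_2}\|^2|u_0|\|\Omega_\psi\|,$$ with $\hat\mu(0)>0$, $\hat\nu(0)>0$, where $u_0\in\mathbb{R}$ is a Lipschitz function satisfying $u_0\in K_{BF}^g(x)$; (iv) $h(x(0))\geq\frac{\hat\mu(0)^2+\bar\mu^2}{2\gamma_\theta}+\frac{\hat\nu(0)^2+\bar\nu^2}{2\gamma_\lambda}$. Then the control input $u=s_g(u_0)h_{x_2}^\top\in\mathbb{R}^n$, where $$s_g(u_0)=u_0+\frac{\kappa_{1,g}}{b^*}+\frac{\kappa_{2,g}^2u_0^2}{b^*(\kappa_{2,g}\|h_{x_2}\||u_0|+\epsilon_2)},\quad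 \kappa_{1,g}=\frac{\hat\mu^2\|\Omega_\varphi\|^2}{\hat\mu\|\Omega_\varphi\|\|h_{x_2}\|+\epsilon_1},\quad\kappa_{2,g}=\hat\nu\|\Omega_\psi\|\|h_{x_2}\|,$$ ensures $h(x(t))\geq0$ for all $t>0$ along the closed-loop trajectory.
   Context: Let $m\ge0$, $n\ge1$, $[n]=\{1,\dots,n\}$, state $x=(x_1,x_2)\in\mathbb{R}^{m+n}$ ($x_2\in\mathbb{R}^n$), input $u\in\mathbb{R}^n$, system $$\dot x=f(x)+f_u(x)+\begin{pmatrix}0_m\\ f_\theta(x)\end{pmatrix}+\begin{pmatrix}0_{m\times n}\\ g(x)+g_\lambda(x)\end{pmatrix}u,$$ with $f$ known Lipschitz, $f_u$ unknown Lipschitz (both $\mathbb{R}^{m+n}\to\mathbb{R}^{m+n}$), $f_\theta(x)=[\theta_1^\top\varphi_1(x),\dots,\theta_n^\top\varphi_n(x)]^\top$ with known $\varphi_i:\mathbb{R}^{m+n}\to\mathbb{R}^{p_i}$ and unknown $\theta_i\in\mathbb{R}^{p_i}$; $g,g_\lambda$ are $n\times n$ matrices (not necessarily diagonal) with entries $(g)_{ij}=g_{ij}(x)$, $(g_\lambda)_{ij}=\lambda_{ij}^\top\psi_{ij}(x)$, with known $g_{ij}:\mathbb{R}^{m+n}\to\mathbb{R}$, $\psi_{ij}:\mathbb{R}^{m+n}\to\mathbb{R}^{q_{ij}}$ and unknown $\lambda_{ij}\in\mathbb{R}^{q_{ij}}$. $h:\mathbb{R}^{m+n}\to\mathbb{R}$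 is continuously differentiable, $h_x=\partial h/\partial x$, $h_{x_2}=\partial h/\partial x_2$ are row vectors with entries $h_{x,j}$. Norms: Euclidean for vectors. Vector inequalities are entrywise. Assumption A: known $\underline f_u,\overline f_u$ with $\underline f_u(x)\le f_u(x)\le\overline f_u(x)$ for all $x$ (entries $\underline f_{u,j},\overline f_{u,j}$). Assumption B$'$: known vectors with $\underline\theta_i\le\theta_i\le\overline\theta_i$ and $\underline\lambda_{ij}\le\lambda_{ij}\le\overline\lambda_{ij}$ for all $i,j\in[n]$. Assumption C$'$: with $\tilde g=g+g_\lambda$, there is a compact set $\mathcal{X}\supset\mathcal{C}$ and a constant $b^*>0$ such that for all $x\in\mathcal{X}$ the matrix $\frac{\tilde g(x)+\tilde g(x)^\top}{2}$ is positive definite with smallest singular value at least $b^*$. Fix nominal values $\theta_i^0\in[\underline\theta_i,\overline\theta_i]$, $\lambda_{ij}^0\in[\underline\lambda_{ij},\overline\lambda_{ij}]$ (entrywise). Let $\Theta=[\theta_1^\top,\dots,\theta_n^\top]^\top$, $\Theta^0=[\theta_1^{0\top},\dots,\theta_n^{0\top}]^\top$, $\Lambda=[\lambda_{11}^\top,\lambda_{12}^\top,\dots,\lambda_{nn}^\top]^\top$, $\Lambda^0$ analogously, $\Omega_\varphi=[\varphi_1^\top,\dots,\varphi_n^\top]^\top$, $\Omega_\psi=[\psi_{11}^\top,\psi_{12}^\top,\dots,\psi_{nn}^\top]^\top$, $f_\theta^0=[\theta_1^{0\top}\varphi_1,\dots,\theta_n^{0\top}\varphi_n]^\top$, and $g_\lambda^0$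 the $n\times n$ matrix with entries $\lambda_{ij}^{0\top}\psi_{ij}$. With $\overline\Theta,\underline\Theta,\overline\Lambda,\underline\Lambda$ the correspondingly stacked bound vectors, $M=\sum_i p_i$, $N=\sum_{i,j}q_{ij}$, set $\bar\mu=\sqrt{\sum_{j=1}^M\max\{(\overline\Theta_j-\Theta^0_j)^2,(\underline\Theta_j-\Theta^0_j)^2\}}$, $\bar\nu=\sqrt{\sum_{j=1}^N\max\{(\overline\Lambda_j-\Lambda^0_j)^2,(\underline\Lambda_j-\Lambda^0_j)^2\}}$. Define $\mathcal{M}(x)=h_x f+\sum_{j=1}^{m+n}\min\{h_{x,j}\underline f_{u,j},h_{x,j}\overline f_{u,j}\}$. *)

From HB Require Import structures.
From mathcomp Require Import all_boot all_order all_algebra.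
From mathcomp Require Import all_classical all_reals all_analysis.
Set Implicit Arguments. Unset Strict Implicit. Unset Printing Implicit Defensive.
Import Order.TTheory GRing.Theory Num.Theory.
Import numFieldNormedType.Exports.
Local Open Scope ring_scope.
Local Open Scope classical_set_scope.

Section Defs.
Variable R : realType.

Definition enorm (a b : nat) (A : 'M[R]_(a, b)) : R :=
  Num.sqrt (\sum_i \sum_j A i j ^+ 2).

Definition lipschitz_eucl (a b : nat) (F : 'cV[R]_a -> 'cV[R]_b) : Prop :=
  exists L : R, forall y z, enorm (F y - F z) <= L * enorm (y - z).

Definition lipschitz_eucl_scalar (a : nat) (F : 'cV[R]_a -> R) : Prop :=
  exists L : R, forall y z, `|F y - F z| <= L * enorm (y - z).

Definition sigma_min (k : nat) (A : 'M[R]_k) : R :=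
  inf [set enorm (A *m v) | v in [set v : 'cV[R]_k | enorm v = 1]].

Definition posdef (k : nat) (A : 'M[R]_k) : Prop :=
  forall v : 'cV[R]_k, v != 0 -> 0 < (v^T *m A *m v) 0 0.

Definition sym_part (k : nat) (A : 'M[R]_k) : 'M[R]_k := (2%:R)^-1 *: (A + A^T).

Definition grad (N : nat) (h : 'cV[R]_N -> R) (y : 'cV[R]_N) : 'rV[R]_N :=
  \row_j 'D_(delta_mx j 0) h y.

Definition grad2 (m n : nat) (h : 'cV[R]_(m + n) -> R) (y : 'cV[R]_(m + n)) : 'rV[R]_n :=
  rsubmx (grad h y).

Definition safe_set (N : nat) (h : 'cV[R]_N -> R) : set 'cV[R]_N := [set y | 0 <= h y].

Section Param.
Variables (N n : nat) (p : 'I_n -> nat) (q : 'I_n -> 'I_n -> nat).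

Definition f_theta (phi : forall i : 'I_n, 'cV[R]_N -> 'I_(p i) -> R)
  (th : forall i : 'I_n, 'I_(p i) -> R) (y : 'cV[R]_N) : 'cV[R]_n :=
  \col_i \sum_(k < p i) th i k * phi i y k.

Definition g_lambda (psi : forall i j : 'I_n, 'cV[R]_N -> 'I_(q i j) -> R)
  (lam : forall i j : 'I_n, 'I_(q i j) -> R) (y : 'cV[R]_N) : 'M[R]_n :=
  \matrix_(i, j) \sum_(k < q i j) lam i j k * psi i j y k.

(* ||Omega_phi(y)||, ||Omega_psi(y)|| (Euclidean norms of stacked vectors) *)
Definition norm_Omega_phi (phi : forall i : 'I_n, 'cV[R]_N -> 'I_(p i) -> R)
  (y : 'cV[R]_N) : R :=
  Num.sqrt (\sum_i \sum_(k < p i) phi i y k ^+ 2).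

Definition norm_Omega_psi (psi : forall i j : 'I_n, 'cV[R]_N -> 'I_(q i j) -> R)
  (y : 'cV[R]_N) : R :=
  Num.sqrt (\sum_i \sum_j \sum_(k < q i j) psi i j y k ^+ 2).

Definition mu_bar (th_lo th_hi th0 : forall i : 'I_n, 'I_(p i) -> R) : R :=
  Num.sqrt (\sum_i \sum_(k < p i)
    Num.max ((th_hi i k - th0 i k) ^+ 2) ((th_lo i k - th0 i k) ^+ 2)).

Definition nu_bar (lam_lo lam_hi lam0 : forall i j : 'I_n, 'I_(q i j) -> R) : R :=
  Num.sqrt (\sum_i \sum_j \sum_(k < q i j)
    Num.max ((lam_hi i j k - lam0 i j k) ^+ 2) ((lam_lo i j k - lam0 i j k) ^+ 2)).
End Param.

Definition Mfun (N : nat) (h : 'cV[R]_N -> R) (f fu_lo fu_hi : 'cV[R]_N -> 'cV[R]_N)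
  (y : 'cV[R]_N) : R :=
  (grad h y *m f y) 0 0 +
  \sum_j Num.min (grad h y 0 j * fu_lo y j 0) (grad h y 0 j * fu_hi y j 0).

Definition s_g (bstar eps1 eps2 muh nuh nOphi nOpsi nhx2 u0v : R) : R :=
  let k1 := muh ^+ 2 * nOphi ^+ 2 / (muh * nOphi * nhx2 + eps1) in
  let k2 := nuh * nOpsi * nhx2 in
  u0v + k1 / bstar + k2 ^+ 2 * u0v ^+ 2 / (bstar * (k2 * nhx2 * `|u0v| + eps2)).

End Defs.

From HB Require Import structures.
From mathcomp Require Import all_boot all_order all_algebra.
From mathcomp Require Import all_classical all_reals all_analysis.
From mathcomp Require Import ring lra.
Set Implicit Arguments. Unset Strict Implicit. Unset Printing Implicit Defensive.
Import Order.TTheory GRing.Theory Num.Theory.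
Import numFieldNormedType.Exports.
Local Open Scope ring_scope.
Local Open Scope classical_set_scope.

(* Let te = |Theta - Theta0| and le = |Lambda - Lambda0| be the unknown parameter errors and
   consider the barrier B = h - (te - mu^)^2/(2 gamma_theta) - (le - nu^)^2/(2 gamma_lambda).
   While x stays in C, Cauchy-Schwarz bounds the parametric uncertainty in dh/dt by
   te |h_x2| |Omega_phi| and le |h_x2|^2 |u0| |Omega_psi|, Assumption C' gives
   h_x2 g~ h_x2^T >= b* |h_x2|^2, so the robustifying terms of s_g cover these bounds with
   mu^, nu^ in place of te, le up to eps1 + eps2, and the update laws of mu^, nu^ cancel the
   remaining cross terms: dB/dt >= - gamma B.  Hence e^(gamma t) B(t) >= B(0) >= te mu^(0)/gamma_theta
   >= 0 by (iv).  At a first exit time h = 0, so B <= - (te - mu^)^2/(2 gamma_theta) <= 0 there;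
   both bounds together force te = 0 = mu^, contradicting the positivity of mu^. *)


Section SumInequalities.
Variable R : rcfType.

Lemma discr_le_of_quad_ge0 (a b c : R) : 0 <= a ->
  (forall t, 0 <= a * t ^+ 2 + 2 * b * t + c) -> b ^+ 2 <= a * c.
Proof.
move=> a_ge0 quad_ge0; have [a0|a_neq0] := eqVneq a 0.
  rewrite a0 mul0r in quad_ge0 *; have [->|b_neq0] := eqVneq b 0; first by rewrite expr0n.
  have := quad_ge0 (- (c + 1) / (2 * b)).
  have -> : 2 * b * (- (c + 1) / (2 * b)) = - (c + 1) by field.
  by lra.
have a_gt0 : 0 < a by rewrite lt_def a_neq0 a_ge0.
have := quad_ge0 (- b / a); rewrite -(@ler_pM2r _ a) // mul0r.
have -> : (a * (- b / a) ^+ 2 + 2 * b * (- b / a) + c) * a = a * c - b ^+ 2 by field.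
lra.
Qed.

Lemma sumr_sqr_ge0 (I : finType) (a : I -> R) : 0 <= \sum_i a i ^+ 2.
Proof. by apply: sumr_ge0 => i _; exact: sqr_ge0. Qed.

Lemma sqr_le_sumr_sqr (I : finType) (a : I -> R) i : a i ^+ 2 <= \sum_j a j ^+ 2.
Proof. by rewrite (bigD1 i) //= lerDl sumr_ge0 // => j _; exact: sqr_ge0. Qed.

Lemma cauchy_schwarz_sum (I : finType) (a b : I -> R) :
  \sum_i a i * b i <= Num.sqrt (\sum_i a i ^+ 2) * Num.sqrt (\sum_i b i ^+ 2).
Proof.
set A := \sum_i a i ^+ 2; set B := \sum_i b i ^+ 2; set C := \sum_i a i * b i.
have sqrC_le : C ^+ 2 <= A * B.
  apply: discr_le_of_quad_ge0 => [|t]; first exact: sumr_sqr_ge0.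
  have -> : A * t ^+ 2 + 2 * C * t + B = \sum_i (a i * t + b i) ^+ 2.
    rewrite /A /B /C mulr_suml mulrC mulr_sumr mulr_sumr -!big_split /=.
    by apply: eq_bigr => i _; ring.
  exact: sumr_sqr_ge0.
rewrite -sqrtrM; last exact: sumr_sqr_ge0.
have [C_le0|C_gt0] := leP C 0.
  exact: le_trans C_le0 (sqrtr_ge0 _).
by rewrite -(ger0_norm (ltW C_gt0)) -sqrtr_sqr ler_wsqrtr.
Qed.

Lemma cauchy_schwarz_blocks (I : finType) (F U V : I -> R) :
  (forall i, 0 <= U i) -> (forall i, 0 <= V i) ->
  (forall i, F i <= Num.sqrt (U i) * Num.sqrt (V i)) ->
  \sum_i F i <= Num.sqrt (\sum_i U i) * Num.sqrt (\sum_i V i).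
Proof.
move=> U_ge0 V_ge0 F_le; apply: le_trans (ler_sum _ (fun i _ => F_le i)) _.
apply: le_trans (cauchy_schwarz_sum _ _) _.
by rewrite (eq_bigr _ (fun i _ => sqr_sqrtr (U_ge0 i)))
  (eq_bigr (fun i => V i) (fun i _ => sqr_sqrtr (V_ge0 i))).
Qed.

Lemma oppr_sum_blocks_le (k : nat) (p : 'I_k -> nat) (a : 'I_k -> R)
    (phi d : forall i, 'I_(p i) -> R) :
  - (\sum_i a i * \sum_(l < p i) d i l * phi i l) <=
  Num.sqrt (\sum_i \sum_(l < p i) d i l ^+ 2) *
  (Num.sqrt (\sum_i a i ^+ 2) * Num.sqrt (\sum_i \sum_(l < p i) phi i l ^+ 2)).
Proof.
have -> : - (\sum_i a i * \sum_(l < p i) d i l * phi i l) =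
    \sum_i \sum_(l < p i) (- (a i * phi i l)) * d i l.
  rewrite -sumrN; apply: eq_bigr => i _; rewrite mulr_sumr -sumrN.
  by apply: eq_bigr => l _; ring.
apply: le_trans (_ : _ <= Num.sqrt (\sum_i \sum_(l < p i) (- (a i * phi i l)) ^+ 2) *
    Num.sqrt (\sum_i \sum_(l < p i) d i l ^+ 2)) _.
  by apply: cauchy_schwarz_blocks => i;
    [exact: sumr_sqr_ge0 | exact: sumr_sqr_ge0 | exact: cauchy_schwarz_sum].
rewrite mulrC ler_wpM2l ?sqrtr_ge0 // -sqrtrM ?sumr_sqr_ge0 //.
rewrite ler_sqrt; last by rewrite mulr_ge0 ?sumr_sqr_ge0 // sumr_ge0 // => i _;
  exact: sumr_sqr_ge0.
rewrite mulr_sumr; apply: ler_sum => i _; rewrite mulr_sumr; apply: ler_sum => l _.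
by rewrite sqrrN exprMn ler_wpM2r ?sqr_ge0 ?sqr_le_sumr_sqr.
Qed.

Lemma oppr_sum_quad_blocks_le (k : nat) (q : 'I_k -> 'I_k -> nat) (a : 'I_k -> R)
    (psi d : forall i j, 'I_(q i j) -> R) (u : R) :
  - (u * \sum_i \sum_j a i * (\sum_(l < q i j) d i j l * psi i j l) * a j) <=
  Num.sqrt (\sum_i \sum_j \sum_(l < q i j) d i j l ^+ 2) *
  (`|u| * (\sum_i a i ^+ 2) * Num.sqrt (\sum_i \sum_j \sum_(l < q i j) psi i j l ^+ 2)).
Proof.
have -> : - (u * \sum_i \sum_j a i * (\sum_(l < q i j) d i j l * psi i j l) * a j) =
    \sum_i \sum_j \sum_(l < q i j) (- (u * a i * a j * psi i j l)) * d i j l.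
  rewrite mulr_sumr -sumrN; apply: eq_bigr => i _; rewrite mulr_sumr -sumrN.
  apply: eq_bigr => j _; rewrite mulr_sumr mulr_suml mulr_sumr -sumrN.
  by apply: eq_bigr => l _; ring.
set A := \sum_i a i ^+ 2.
have A_ge0 : 0 <= A by exact: sumr_sqr_ge0.
apply: le_trans (_ : _ <= Num.sqrt (\sum_i \sum_j \sum_(l < q i j)
    (- (u * a i * a j * psi i j l)) ^+ 2) *
    Num.sqrt (\sum_i \sum_j \sum_(l < q i j) d i j l ^+ 2)) _.
  apply: cauchy_schwarz_blocks => i;
    try by apply: sumr_ge0 => j _; exact: sumr_sqr_ge0.
  by apply: cauchy_schwarz_blocks => j;
    [exact: sumr_sqr_ge0 | exact: sumr_sqr_ge0 | exact: cauchy_schwarz_sum].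
rewrite mulrC ler_wpM2l ?sqrtr_ge0 //.
have -> : `|u| * A = Num.sqrt ((`|u| * A) ^+ 2).
  by rewrite sqrtr_sqr (ger0_norm (mulr_ge0 (normr_ge0 u) A_ge0)).
rewrite -sqrtrM ?sqr_ge0 // ler_sqrt; last first.
  rewrite mulr_ge0 ?sqr_ge0 // sumr_ge0 // => i _.
  by rewrite sumr_ge0 // => j _; exact: sumr_sqr_ge0.
rewrite mulr_sumr; apply: ler_sum => i _; rewrite mulr_sumr; apply: ler_sum => j _.
rewrite mulr_sumr; apply: ler_sum => l _.
rewrite sqrrN exprMn ler_wpM2r ?sqr_ge0 // -mulrA exprMn [leRHS]exprMn.
rewrite real_normK ?num_real // ler_wpM2l ?sqr_ge0 // exprMn expr2.
by apply: ler_pM; rewrite ?sqr_ge0 ?sqr_le_sumr_sqr.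
Qed.

Lemma sqr_sub_le_max_ends (lo hi a b : R) : lo <= a <= hi -> lo <= b <= hi ->
  (a - b) ^+ 2 <= Num.max ((hi - b) ^+ 2) ((lo - b) ^+ 2).
Proof.
move=> /andP [lo_a a_hi] /andP [lo_b b_hi]; rewrite le_max.
by have [b_le_a|a_lt_b] := leP b a; apply/orP; [left|right]; nra.
Qed.

End SumInequalities.

Section QuadraticForms.
Variables (R : realType) (k : nat).
Implicit Types (S T : 'M[R]_k) (u v w : 'cV[R]_k).

Definition qform S u v := (u^T *m S *m v) 0 0.
Definition sqnorm v := qform 1%:M v v.

Lemma qformE S u v : qform S u v = \sum_i \sum_j u i 0 * S i j * v j 0.
Proof.
rewrite /qform mxE exchange_big /=; apply: eq_bigr => j _; rewrite mxE mulr_suml.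
by apply: eq_bigr => i _; rewrite mxE.
Qed.

Lemma sqnormE v : sqnorm v = \sum_i v i 0 ^+ 2.
Proof.
rewrite /sqnorm /qform mulmx1 mxE.
by apply: eq_bigr => i _; rewrite mxE expr2.
Qed.

Lemma sqnorm_ge0 v : 0 <= sqnorm v.
Proof. by rewrite sqnormE; exact: sumr_sqr_ge0. Qed.

Lemma sqnorm_eq0 v : (sqnorm v == 0) = (v == 0).
Proof.
apply/idP/idP => [|/eqP->]; last by rewrite sqnormE big1 // => i _; rewrite mxE expr0n.
rewrite sqnormE psumr_eq0 => [/allP v0|i _]; last exact: sqr_ge0.
apply/eqP/matrixP => i j; rewrite (ord1 j) mxE.
by have := v0 i (mem_index_enum _); rewrite sqrf_eq0 => /eqP.
Qed.

Lemma enorm_sqnorm v : enorm v = Num.sqrt (sqnorm v).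
Proof. by rewrite /enorm sqnormE; congr Num.sqrt; apply: eq_bigr => i _; rewrite big_ord1. Qed.

Lemma enorm_ge0 (a b : nat) (A : 'M[R]_(a, b)) : 0 <= enorm A.
Proof. exact: sqrtr_ge0. Qed.

Lemma sqr_enorm v : enorm v ^+ 2 = sqnorm v.
Proof. by rewrite enorm_sqnorm sqr_sqrtr ?sqnorm_ge0. Qed.

Lemma enorm_tr (r : 'rV[R]_k) : enorm r^T = enorm r.
Proof.
rewrite enorm_sqnorm sqnormE /enorm big_ord1.
by congr Num.sqrt; apply: eq_bigr => j _; rewrite mxE.
Qed.

Lemma qformDl S u w v : qform S (u + w) v = qform S u v + qform S w v.
Proof. by rewrite /qform linearD /= !mulmxDl mxE. Qed.

Lemma qformDr S u w v : qform S u (w + v) = qform S u w + qform S u v.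
Proof. by rewrite /qform mulmxDr mxE. Qed.

Lemma qformZl S c u v : qform S (c *: u) v = c * qform S u v.
Proof. by rewrite /qform linearZ /= -!scalemxAl mxE. Qed.

Lemma qformZr S c u v : qform S u (c *: v) = c * qform S u v.
Proof. by rewrite /qform -scalemxAr mxE. Qed.

Lemma qformDm S T u v : qform (S + T) u v = qform S u v + qform T u v.
Proof. by rewrite /qform mulmxDr mulmxDl mxE. Qed.

Lemma qformBm S T u v : qform (S - T) u v = qform S u v - qform T u v.
Proof. by rewrite /qform mulmxBr mulmxBl !mxE. Qed.

Lemma qformZm c S u v : qform (c *: S) u v = c * qform S u v.
Proof. by rewrite /qform -scalemxAr -scalemxAl mxE. Qed.

Lemma qform_scalar c u v : qform c%:M u v = c * qform 1%:M u v.
Proof. by rewrite /qform mul_mx_scalar -scalemxAl mulmx1 mxE. Qed.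

Lemma qform_tr S u v : qform S^T u v = qform S v u.
Proof.
rewrite /qform; have -> : u^T *m S^T *m v = (v^T *m S *m u)^T.
  by rewrite !trmx_mul !trmxK mulmxA.
by rewrite mxE.
Qed.

Lemma qformC S u v : S^T = S -> qform S u v = qform S v u.
Proof. by move=> S_sym; rewrite -{1}S_sym qform_tr. Qed.

Lemma qform_sym_part S v : qform (sym_part S) v v = qform S v v.
Proof. by rewrite /sym_part qformZm qformDm qform_tr; lra. Qed.

Lemma sym_part_tr S : (sym_part S)^T = sym_part S.
Proof. by rewrite /sym_part linearZ /= linearD /= trmxK addrC. Qed.

Lemma posdef_qform_ge0 S v : posdef S -> 0 <= qform S v v.
Proof.
move=> S_pd; have [->|v_neq0] := eqVneq v 0; last exact/ltW/S_pd.
by rewrite -(scale0r (0 : 'cV[R]_k)) qformZl mul0r.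
Qed.

Lemma enormZ c v : enorm (c *: v) = `|c| * enorm v.
Proof.
rewrite !enorm_sqnorm /sqnorm qformZl qformZr mulrA -expr2.
by rewrite sqrtrM ?sqr_ge0 // sqrtr_sqr.
Qed.

Lemma enorm_normalize v : v != 0 -> enorm ((enorm v)^-1 *: v) = 1.
Proof.
move=> v_neq0; have v_gt0 : 0 < enorm v.
  by rewrite enorm_sqnorm sqrtr_gt0 lt_def sqnorm_ge0 andbT sqnorm_eq0.
by rewrite enormZ ger0_norm ?invr_ge0 ?(ltW v_gt0) // mulVf // gt_eqF.
Qed.

Lemma qform_le_sum_abs S v : qform S v v <= (\sum_i \sum_j `|S i j|) * sqnorm v.
Proof.
rewrite qformE sqnormE mulr_suml; apply: ler_sum => i _; rewrite mulr_suml.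
apply: ler_sum => j _.
have := sqr_le_sumr_sqr (fun l => v l 0) i; have := sqr_le_sumr_sqr (fun l => v l 0) j.
set s := \sum_l _ => vj_le vi_le.
have -> : v i 0 * S i j * v j 0 = S i j * (v i 0 * v j 0) by ring.
apply: le_trans (ler_norm _) _; rewrite normrM ler_wpM2l //.
have : 2 * `|v i 0 * v j 0| <= v i 0 ^+ 2 + v j 0 ^+ 2.
  rewrite normrM -[v i 0 ^+ 2]real_normK ?num_real // -[v j 0 ^+ 2]real_normK ?num_real //.
  by have := sqr_ge0 (`|v i 0| - `|v j 0|); nra.
lra.
Qed.

Lemma sqnorm_mul_shift S c v : sqnorm (S *m v) =
  sqnorm ((S - c%:M) *m v) + 2 * c * qform (S - c%:M) v v + c ^+ 2 * sqnorm v.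
Proof.
have -> : S *m v = (S - c%:M) *m v + c *: v by rewrite mulmxBl mul_scalar_mx subrK.
rewrite /sqnorm qformDl !qformDr !qformZl !qformZr.
have cross w : qform 1%:M w ((S - c%:M) *m v) = qform (S - c%:M) w v.
  by rewrite /qform mulmx1 mulmxA.
by rewrite [qform 1%:M ((S - c%:M) *m v) v]qformC ?trmx1 // !(cross v); ring.
Qed.

Section SemiDefinite.
Variable T : 'M[R]_k.
Hypotheses (T_sym : T^T = T) (T_psd : forall w, 0 <= qform T w w).

Lemma psd_cauchy_schwarz u v : qform T u v ^+ 2 <= qform T u u * qform T v v.
Proof.
apply: discr_le_of_quad_ge0 => [|t]; first exact: T_psd.
have := T_psd (t *: u + v).
rewrite qformDl !qformDr !qformZl !qformZr (qformC v u T_sym).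
by have -> : qform T u u * t ^+ 2 + 2 * qform T u v * t + qform T v v =
  t * (t * qform T u u) + t * qform T u v + (t * qform T u v + qform T v v) by ring.
Qed.

Lemma psd_sqnorm_mul_le v : sqnorm (T *m v) <= (\sum_i \sum_j `|T i j|) * qform T v v.
Proof.
have cs := psd_cauchy_schwarz (T *m v) v.
rewrite (_ : qform T (T *m v) v = sqnorm (T *m v)) in cs; last first.
  by rewrite /sqnorm /qform mulmx1 mulmxA.
have Tv_le := qform_le_sum_abs T (T *m v).
have [->|Tv_neq0] := eqVneq (sqnorm (T *m v)) 0.
  by rewrite mulr_ge0 ?T_psd // sumr_ge0 // => i _; rewrite sumr_ge0.
have Tv_gt0 : 0 < sqnorm (T *m v) by rewrite lt_def Tv_neq0 sqnorm_ge0.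
rewrite -(@ler_pM2l _ (sqnorm (T *m v))) // -expr2.
apply: le_trans cs _; rewrite mulrA ler_wpM2r ?T_psd //.
by rewrite mulrC.
Qed.

End SemiDefinite.

Lemma exists_unit_cV : (0 < k)%N -> exists v : 'cV[R]_k, enorm v = 1.
Proof.
move=> k_gt0; pose c : 'cV[R]_k := const_mx 1.
have c_neq0 : c != 0.
  apply/eqP => /matrixP /(_ (Ordinal k_gt0) 0); rewrite !mxE => /eqP.
  by rewrite oner_eq0.
by exists ((enorm c)^-1 *: c); exact: enorm_normalize.
Qed.

Section RayleighQuotient.
Variable S : 'M[R]_k.
Hypotheses (k_gt0 : (0 < k)%N) (S_sym : S^T = S) (S_pd : posdef S).

Let sphere := [set v : 'cV[R]_k | enorm v = 1].
Let rayleigh_inf := inf [set qform S v v | v in sphere].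

Let rayleigh_has_inf : has_inf [set qform S v v | v in sphere].
Proof.
split; last by exists 0 => _ [v _ <-]; exact: posdef_qform_ge0.
by have [v v1] := exists_unit_cV k_gt0; exists (qform S v v); exists v.
Qed.

Let rayleigh_inf_le v : rayleigh_inf * sqnorm v <= qform S v v.
Proof.
have [->|v_neq0] := eqVneq v 0.
  by rewrite -(scale0r (0 : 'cV[R]_k)) qformZl /sqnorm qformZl !mul0r mulr0.
have := ge_inf rayleigh_has_inf.2 (ex_intro2 _ _ _ (enorm_normalize v_neq0) erefl).
rewrite qformZl qformZr mulrA -expr2 exprVn -/(sqnorm v).
have v_gt0 : 0 < enorm v.
  by rewrite enorm_sqnorm sqrtr_gt0 lt_def sqnorm_ge0 andbT sqnorm_eq0.
by rewrite -sqr_enorm ler_pdivlMl ?exprn_gt0 // mulrC.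
Qed.

(* With T := S - lam I positive semidefinite, |S v|^2 = |T v|^2 + 2 lam v^T T v + lam^2 and
   |T v|^2 <= C v^T T v for unit v; a near-minimiser of the Rayleigh quotient makes v^T T v
   arbitrarily small. *)
Let sigma_min_le_rayleigh_inf : sigma_min S <= rayleigh_inf.
Proof.
set lam := rayleigh_inf; pose T := S - lam%:M; pose C := \sum_i \sum_j `|T i j|.
have T_sym : T^T = T by rewrite /T linearB /= S_sym tr_scalar_mx.
have T_psd w : 0 <= qform T w w.
  by rewrite /T qformBm qform_scalar subr_ge0; exact: rayleigh_inf_le.
have C_ge0 : 0 <= C by rewrite sumr_ge0 // => i _; rewrite sumr_ge0.
have lam_ge0 : 0 <= lam.
  by apply: lb_le_inf => [|_ [v _ <-]]; [case: rayleigh_has_inf | exact: posdef_qform_ge0].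
have sigma_lb : lbound [set enorm (S *m v) | v in sphere] 0.
  by move=> _ [w _ <-]; exact: enorm_ge0.
have sigma_ge0 : 0 <= sigma_min S.
  apply: lb_le_inf sigma_lb; have [v v1] := exists_unit_cV k_gt0.
  by exists (enorm (S *m v)); exists v.
have sigma_le v : sphere v -> sigma_min S <= enorm (S *m v).
  by move=> v1; apply: ge_inf; [exists 0 | exists v].
have sqr_sigma_le e : 0 < e -> sigma_min S ^+ 2 <= lam ^+ 2 + (C + 2 * lam) * e.
  move=> e_gt0; have [_ [v v1 <-] v_lt] := inf_adherent e_gt0 rayleigh_has_inf.
  have sqv : sqnorm v = 1 by rewrite -sqr_enorm v1 expr1n.
  have := sigma_le v v1; rewrite enorm_sqnorm => sigma_le_v.
  have : sigma_min S ^+ 2 <= sqnorm (S *m v).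
    rewrite -(sqr_sqrtr (sqnorm_ge0 (S *m v))).
    by have := sqrtr_ge0 (sqnorm (S *m v)); nra.
  rewrite (sqnorm_mul_shift S lam) -/T sqv mulr1.
  have := psd_sqnorm_mul_le T_sym T_psd v; rewrite -/C; have := T_psd v.
  have : qform T v v < e by rewrite /T qformBm qform_scalar -/(sqnorm v) sqv; lra.
  nra.
have : sigma_min S ^+ 2 <= lam ^+ 2.
  apply/ler_addgt0Pr => e e_gt0.
  have K_gt0 : 0 < C + 2 * lam + 1 by lra.
  apply: le_trans (sqr_sigma_le _ (divr_gt0 e_gt0 K_gt0)) _.
  by rewrite lerD2l mulrA ler_pdivrMr //; nra.
nra.
Qed.

Lemma sigma_min_sqnorm_le_qform b v : b <= sigma_min S -> b * sqnorm v <= qform S v v.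
Proof.
move=> b_le; apply: le_trans (rayleigh_inf_le v); rewrite ler_wpM2r ?sqnorm_ge0 //.
exact: le_trans sigma_min_le_rayleigh_inf.
Qed.

End RayleighQuotient.

End QuadraticForms.

Section RealFunctions.
Variable R : realType.
Implicit Types (F : R -> R) (t : R).

Lemma is_derive_comp_grad (N : nat) (h : 'cV[R]_N -> R) (x : R -> 'cV[R]_N) t :
  differentiable h (x t) -> derivable x t 1 ->
  is_derive t 1 (h \o x) ((grad h (x t) *m 'D_1 x t) 0 0).
Proof.
move=> dh dx; have dx' : differentiable x t by apply/derivable1_diffP.
have dhx : differentiable (h \o x) t by exact: differentiable_comp.
apply: DeriveDef; first exact: diff_derivable.
rewrite (deriveE (f := h \o x)) // diff_comp // /= -(deriveE (f := x)) //.
rewrite [in LHS](matrix_sum_delta ('D_1 x t)) linear_sum /= mxE.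
by apply: eq_bigr => j _; rewrite big_ord1 linearZ /= -deriveE // !mxE mulrC.
Qed.

Lemma continuous_differentiable_comp (N : nat) (h : 'cV[R]_N -> R) (x : R -> 'cV[R]_N)
    (A : set R) : (forall y, differentiable h y) -> {within A, continuous x} ->
  {within A, continuous (fun s => h (x s))}.
Proof.
move=> h_diff x_cont s; apply: (continuous_comp (x_cont s)).
exact: differentiable_continuous.
Qed.

Lemma is_derive_sqr_sub_div F (c d : R) t dF : is_derive t 1 F dF ->
  is_derive t 1 (fun s => (c - F s) ^+ 2 / d) (- (2 * (c - F t) * dF) / d).
Proof.
move=> dF_F; set G := fun s => c - F s.
have dG : is_derive t 1 G (0 - dF) := is_deriveB (is_derive_cst c t 1) dF_F.
have dG2 : is_derive t 1 (fun s => G s * G s * d^-1)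
    (G t * G t * 0 + d^-1 * (G t * (0 - dF) + G t * (0 - dF))).
  exact: is_deriveM (is_deriveM dG dG) (is_derive_cst d^-1 t 1).
have -> : (fun s => (c - F s) ^+ 2 / d) = (fun s => G s * G s * d^-1).
  by apply/funext => s; rewrite expr2.
by apply: is_derive_eq dG2 _; rewrite /G; ring.
Qed.

Lemma continuous_sqr_sub_div (A : set R) F (c d : R) : {within A, continuous F} ->
  {within A, continuous (fun s => (c - F s) ^+ 2 / d)}.
Proof.
move=> F_cont s; set G := fun s => c - F s.
have G_cont : {for s, continuous (G : subspace A -> R)}.
  by apply: continuousB; [exact: cst_continuous | exact: F_cont].
have -> : (fun s => (c - F s) ^+ 2 / d) = (G \* G) \* cst d^-1.
  by apply/funext => z /=; rewrite expr2.
by apply: continuousM; [exact: continuousM | exact: cst_continuous].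
Qed.

Lemma continuous_sub_sqr_penalties (A : set R) (H F1 F2 : R -> R) (c1 d1 c2 d2 : R) :
  {within A, continuous H} -> {within A, continuous F1} -> {within A, continuous F2} ->
  {within A, continuous (fun s => H s - (c1 - F1 s) ^+ 2 / d1 - (c2 - F2 s) ^+ 2 / d2)}.
Proof.
move=> H_cont F1_cont F2_cont s.
have F1_term := continuous_sqr_sub_div (c := c1) (d := d1) F1_cont.
have F2_term := continuous_sqr_sub_div (c := c2) (d := d2) F2_cont.
exact: continuousB (continuousB (H_cont s) (F1_term s)) (F2_term s).
Qed.

Lemma expR_mul_ge_of_derive F (gam b : R) : 0 <= b -> {within `[0, b], continuous F} ->
  (forall s, 0 < s < b -> exists2 dF, is_derive s 1 F dF & 0 <= gam * F s + dF) ->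
  F 0 <= expR (gam * b) * F b.
Proof.
move=> b_ge0 F_cont F_rate; pose E s := expR (gam * s) * F s.
have expR_der (s : R) :
    is_derive s 1 (fun s => expR (gam * s)) (expR (gam * s) * gam).
  have lin : is_derive s 1 (fun s : R => gam * s) gam.
    have := @is_deriveZ R R^o R^o id gam s 1 1 (is_derive_id _ _).
    by rewrite /GRing.scale /= mulr1.
  exact: is_derive1_comp (is_derive_expR (gam * s)) lin.
have E_rate s : 0 < s < b -> exists2 dE, is_derive s 1 E dE & 0 <= dE.
  move=> /F_rate [dF F_der dF_ge].
  exists (expR (gam * s) * dF + F s * (expR (gam * s) * gam)).
    exact: is_deriveM.
  have -> : expR (gam * s) * dF + F s * (expR (gam * s) * gam) =
    expR (gam * s) * (gam * F s + dF) by ring.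
  by rewrite mulr_ge0 // ltW ?expR_gt0.
have E_cont : {within `[0, b], continuous E}.
  have expR_cont : {within `[0, b], continuous (fun s => expR (gam * s))}.
    apply: continuous_subspaceT => z.
    apply: (continuous_comp (f := fun s => gam * s)); last exact: continuous_expR.
    exact: mulrl_continuous.
  have -> : E = (fun s => expR (gam * s)) \* F by [].
  by move=> s; apply: continuousM; [exact: expR_cont | exact: F_cont].
have E_der s : s \in `]0, b[%R -> derivable E s 1.
  by rewrite in_itv /= => /E_rate [dE []].
have E'_ge0 s : s \in `]0, b[%R -> 0 <= E^`() s.
  by rewrite in_itv /= => /E_rate [dE E_der' dE_ge]; rewrite derive1E derive_val.
have := @ger0_derive1_le_cc R E 0 b E_der E'_ge0 E_cont 0 b.
rewrite /E mulr0 expR0 mul1r; apply; rewrite ?in_itv /= ?lexx ?b_ge0 //.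
Qed.

Lemma gt0_of_derive_ge F (gam : R) : {within `[0, +oo[, continuous F} -> 0 < F 0 ->
  (forall s, 0 < s -> derivable F s 1 /\ - gam * F s <= 'D_1 F s) ->
  forall s, 0 <= s -> 0 < F s.
Proof.
move=> F_cont F0_gt0 F_rate s s_ge0.
have sub_s : `[0, s] `<=` `[0, +oo[ by move=> z; rewrite /= !in_itv /= => /andP [->].
have rate z : 0 < z < s -> exists2 dF, is_derive z 1 F dF & 0 <= gam * F z + dF.
  move=> /andP [z_gt0 _]; have [F_der F_ge] := F_rate z z_gt0.
  by exists ('D_1 F z); [exact: derivableP | lra].
have := expR_mul_ge_of_derive s_ge0 (continuous_subspaceW sub_s F_cont) rate.
by move=> /(lt_le_trans F0_gt0); rewrite pmulr_rgt0 // expR_gt0.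
Qed.

Lemma ge0_of_first_exit F : {within `[0, +oo[, continuous F} -> 0 < F 0 ->
  (forall t0, 0 < t0 -> (forall s, 0 <= s < t0 -> 0 <= F s) -> F t0 <= 0 -> False) ->
  forall t, 0 <= t -> 0 <= F t.
Proof.
move=> F_cont F0_gt0 no_exit t t_ge0; rewrite leNgt; apply/negP => Ft_lt0.
pose A := [set s | 0 <= s /\ F s < 0].
have A_inf : has_inf A by split; [exists t | exists 0 => s []].
set t0 := inf A.
have t0_ge0 : 0 <= t0 by apply: lb_le_inf A_inf.1 _ => s [].
have F_ge0_before s : 0 <= s < t0 -> 0 <= F s.
  move=> /andP [s_ge0 s_lt]; rewrite leNgt; apply/negP => Fs_lt0.
  by have := ge_inf A_inf.2 (conj s_ge0 Fs_lt0); rewrite leNgt s_lt.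
have Ft0_le0 : F t0 <= 0.
  rewrite leNgt; apply/negP => Ft0_gt0.
  have := (subspace_continuousP _ _).1 F_cont t0.
  rewrite /= in_itv /= t0_ge0 => /(_ isT) /cvgr_gt /(_ _ Ft0_gt0).
  rewrite near_withinE => /nbhs_ballP [d d_gt0 F_pos].
  have [a [a_ge0 Fa_lt0] a_lt] := inf_adherent d_gt0 A_inf.
  have t0_le_a : t0 <= a := ge_inf A_inf.2 (conj a_ge0 Fa_lt0).
  have : 0 < F a.
    apply: F_pos; last by rewrite /= in_itv /= a_ge0.
    by rewrite /ball /= ler0_norm ?subr_le0 // opprB; lra.
  by lra.
have t0_gt0 : 0 < t0.
  by rewrite lt_def t0_ge0 andbT; apply/eqP => t0_eq0; move: Ft0_le0; rewrite t0_eq0; lra.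
exact: no_exit t0 t0_gt0 F_ge0_before Ft0_le0.
Qed.

End RealFunctions.

Section RobustGain.
Variables (R : realType) (bstar eps1 eps2 mh nh Ophi Opsi nx u : R).
Hypotheses (bstar_gt0 : 0 < bstar) (eps1_gt0 : 0 < eps1) (eps2_gt0 : 0 < eps2).
Hypotheses (mh_ge0 : 0 <= mh) (nh_ge0 : 0 <= nh) (Ophi_ge0 : 0 <= Ophi)
  (Opsi_ge0 : 0 <= Opsi) (nx_ge0 : 0 <= nx).

Let sg := s_g bstar eps1 eps2 mh nh Ophi Opsi nx u.

Lemma sub_le_sqr_divD (a e : R) : 0 <= a -> 0 < e -> a - e <= a ^+ 2 / (a + e).
Proof. by move=> a_ge0 e_gt0; rewrite ler_pdivlMr; [nra | lra]. Qed.

Let d1_gt0 : 0 < mh * Ophi * nx + eps1.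
Proof. by rewrite ltr_wpDl ?mulr_ge0. Qed.

Let d2_gt0 : 0 < nh * Opsi * nx * nx * `|u| + eps2.
Proof. by rewrite ltr_wpDl ?mulr_ge0. Qed.

Lemma s_g_ge : u <= sg.
Proof.
rewrite /sg /s_g /= -addrA lerDl; apply: addr_ge0; apply: divr_ge0.
- by apply: divr_ge0; [rewrite mulr_ge0 ?sqr_ge0 | exact: ltW].
- exact: ltW.
- by rewrite mulr_ge0 ?sqr_ge0.
- by apply: mulr_ge0; exact: ltW.
Qed.

Lemma s_g_gain : mh * Ophi * nx - eps1 + (nh * Opsi * nx ^+ 2 * `|u| - eps2)
  <= (sg - u) * (bstar * nx ^+ 2).
Proof.
set k2 := nh * Opsi * nx.
have -> : (sg - u) * (bstar * nx ^+ 2) = (mh * Ophi * nx) ^+ 2 / (mh * Ophi * nx + eps1)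
    + (k2 * nx * `|u|) ^+ 2 / (k2 * nx * `|u| + eps2).
  rewrite /sg /s_g /= -/k2 -[u ^+ 2]real_normK ?num_real //.
  by field; rewrite !gt_eqF.
have -> : nh * Opsi * nx ^+ 2 * `|u| = k2 * nx * `|u| by rewrite /k2 expr2 !mulrA.
by apply: lerD; apply: sub_le_sqr_divD; rewrite ?mulr_ge0.
Qed.

End RobustGain.

Lemma sum_min_le_mulmx (R : realDomainType) (k : nat) (a : 'rV[R]_k)
    (lo hi w : 'cV[R]_k) : (forall j, lo j 0 <= w j 0 <= hi j 0) ->
  \sum_j Num.min (a 0 j * lo j 0) (a 0 j * hi j 0) <= (a *m w) 0 0.
Proof.
move=> w_in; rewrite mxE; apply: ler_sum => j _; rewrite ge_min.
have /andP [lo_w w_hi] := w_in j.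
by have [a_ge0|a_lt0] := leP 0 (a 0 j); [rewrite ler_wpM2l | rewrite orbC ler_wnM2l // ltW].
Qed.

Lemma mulmx_col_mx0 (R : pzRingType) (k l : nat) (a : 'rV[R]_(k + l))
    (F : 'cV[R]_(k + l)) (w : 'cV[R]_l) :
  (a *m (F + col_mx 0 w)) 0 0 = (a *m F) 0 0 + (rsubmx a *m w) 0 0.
Proof. by rewrite mulmxDr -{2}(hsubmxK a) mul_row_col mulmx0 add0r mxE. Qed.

Section ClosedLoop.
Variables (R : realType) (m n : nat) (p : 'I_n -> nat) (q : 'I_n -> 'I_n -> nat).
(* Otherwise the block index [i] of [th i l] would become implicit. *)
Local Unset Implicit Arguments.
Variables (phi : forall i : 'I_n, 'cV[R]_(m + n) -> 'I_(p i) -> R)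
  (th th0 : forall i : 'I_n, 'I_(p i) -> R).
Variables (psi : forall i j : 'I_n, 'cV[R]_(m + n) -> 'I_(q i j) -> R)
  (lam lam0 : forall i j : 'I_n, 'I_(q i j) -> R).
Local Set Implicit Arguments.
Variables (f fu fu_lo fu_hi : 'cV[R]_(m + n) -> 'cV[R]_(m + n))
  (g : 'cV[R]_(m + n) -> 'M[R]_n) (h : 'cV[R]_(m + n) -> R) (bstar eps1 eps2 : R).

Definition theta_err := Num.sqrt (\sum_i \sum_(l < p i) (th i l - th0 i l) ^+ 2).
Definition lambda_err :=
  Num.sqrt (\sum_i \sum_j \sum_(l < q i j) (lam i j l - lam0 i j l) ^+ 2).

Lemma theta_err_le_mu_bar (th_lo th_hi : forall i : 'I_n, 'I_(p i) -> R) :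
  (forall i l, th_lo i l <= th i l <= th_hi i l) ->
  (forall i l, th_lo i l <= th0 i l <= th_hi i l) ->
  theta_err <= mu_bar th_lo th_hi th0.
Proof.
move=> th_in th0_in; rewrite ler_sqrt; last first.
  by rewrite sumr_ge0 // => i _; rewrite sumr_ge0 // => l _; rewrite le_max sqr_ge0.
apply: ler_sum => i _; apply: ler_sum => l _; exact: sqr_sub_le_max_ends.
Qed.

Lemma lambda_err_le_nu_bar (lam_lo lam_hi : forall i j : 'I_n, 'I_(q i j) -> R) :
  (forall i j l, lam_lo i j l <= lam i j l <= lam_hi i j l) ->
  (forall i j l, lam_lo i j l <= lam0 i j l <= lam_hi i j l) ->
  lambda_err <= nu_bar lam_lo lam_hi lam0.
Proof.
move=> lam_in lam0_in; rewrite ler_sqrt; last first.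
  rewrite sumr_ge0 // => i _; rewrite sumr_ge0 // => j _.
  by rewrite sumr_ge0 // => l _; rewrite le_max sqr_ge0.
apply: ler_sum => i _; apply: ler_sum => j _; apply: ler_sum => l _.
exact: sqr_sub_le_max_ends.
Qed.

Lemma f_theta_err_le (a : 'rV[R]_n) y :
  (a *m f_theta phi th0 y) 0 0 - theta_err * (enorm a * norm_Omega_phi phi y)
  <= (a *m f_theta phi th y) 0 0.
Proof.
have := oppr_sum_blocks_le (fun i => a 0 i) (phi^~ y) (fun i l => th i l - th0 i l).
rewrite /enorm big_ord1 -/theta_err.
suff -> : (a *m f_theta phi th y) 0 0 = (a *m f_theta phi th0 y) 0 0 +
    \sum_i a 0 i * \sum_(l < p i) (th i l - th0 i l) * phi i y l.
  by rewrite /norm_Omega_phi; lra.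
rewrite !mxE -big_split /=; apply: eq_bigr => i _; rewrite !mxE -mulrDr.
by congr (_ * _); rewrite -big_split /=; apply: eq_bigr => l _; ring.
Qed.

Lemma g_lambda_err_le (A : 'M[R]_n) y (v : 'cV[R]_n) (u : R) :
  u * qform (A + g_lambda psi lam0 y) v v
    - lambda_err * (`|u| * sqnorm v * norm_Omega_psi psi y)
  <= u * qform (A + g_lambda psi lam y) v v.
Proof.
have := oppr_sum_quad_blocks_le (fun i => v i 0) (fun i j => psi i j y)
  (fun i j l => lam i j l - lam0 i j l) u.
rewrite -sqnormE -/lambda_err.
suff -> : qform (A + g_lambda psi lam y) v v = qform (A + g_lambda psi lam0 y) v v +
    \sum_i \sum_j v i 0 * (\sum_(l < q i j) (lam i j l - lam0 i j l) * psi i j y l) * v j 0.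
  by rewrite /norm_Omega_psi; lra.
set L := g_lambda psi lam y; set L0 := g_lambda psi lam0 y.
have -> : A + L = A + L0 + (L - L0) by rewrite [L - L0]addrC addrA addrK.
rewrite qformDm; congr (_ + _); rewrite qformE; apply: eq_bigr => i _; apply: eq_bigr => j _.
congr (_ * _ * _); rewrite !mxE -sumrB.
by apply: eq_bigr => l _; ring.
Qed.

Lemma grad_closed_loop_ge y (u mh nh : R) :
  (0 < n)%N -> (forall j, fu_lo y j 0 <= fu y j 0 <= fu_hi y j 0) ->
  0 < bstar -> 0 < eps1 -> 0 < eps2 -> 0 <= mh -> 0 <= nh ->
  posdef (sym_part (g y + g_lambda psi lam y)) ->
  bstar <= sigma_min (sym_part (g y + g_lambda psi lam y)) ->
  Mfun h f fu_lo fu_hi y + (grad2 h y *m f_theta phi th0 y) 0 0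
    + (grad2 h y *m (g y + g_lambda psi lam0 y) *m (grad2 h y)^T) 0 0 * u
    - (eps1 + eps2)
    - (theta_err - mh) * (enorm (grad2 h y) * norm_Omega_phi phi y)
    - (lambda_err - nh) * (enorm (grad2 h y) ^+ 2 * `|u| * norm_Omega_psi psi y)
  <= (grad h y *m (f y + fu y + col_mx 0 (f_theta phi th y
        + (g y + g_lambda psi lam y) *m
          (s_g bstar eps1 eps2 mh nh (norm_Omega_phi phi y) (norm_Omega_psi psi y)
             (enorm (grad2 h y)) u *: (grad2 h y)^T)))) 0 0.
Proof.
move=> n_gt0 fu_in bstar_gt0 eps1_gt0 eps2_gt0 mh_ge0 nh_ge0 G_pd G_sigma.
set hx := grad2 h y; set v := hx^T; set nx := enorm hx.
set G := g y + g_lambda psi lam y; set G0 := g y + g_lambda psi lam0 y.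
set Ophi := norm_Omega_phi phi y; set Opsi := norm_Omega_psi psi y.
set s := s_g _ _ _ _ _ _ _ _ _.
have qform_hx S : (hx *m S *m v) 0 0 = qform S v v by rewrite /qform trmxK.
have sqnorm_v : sqnorm v = nx ^+ 2 by rewrite -sqr_enorm enorm_tr.
have addE (A B : 'M[R]_1) : (A + B) 0 0 = A 0 0 + B 0 0 by rewrite mxE.
have scaleE c (A : 'M[R]_1) : (c *: A) 0 0 = c * A 0 0 by rewrite mxE.
rewrite qform_hx mulmx_col_mx0 -[rsubmx (grad h y)]/hx (mulmxDr (grad h y)).
rewrite mulmxDr -!scalemxAr mulmxA !addE scaleE qform_hx.
have fu_le := sum_min_le_mulmx (grad h y) fu_in.
have ft_le := f_theta_err_le hx y; rewrite -/nx -/Ophi in ft_le.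
have gl_le := g_lambda_err_le (g y) y v u.
rewrite sqnorm_v -/G -/G0 -/Opsi in gl_le.
have G_ge : bstar * nx ^+ 2 <= qform G v v.
  rewrite -sqnorm_v -qform_sym_part.
  by apply: sigma_min_sqnorm_le_qform; rewrite ?sym_part_tr.
have nx_ge0 : 0 <= nx by exact: enorm_ge0.
have s_gain : mh * Ophi * nx - eps1 + (nh * Opsi * nx ^+ 2 * `|u| - eps2)
    <= (s - u) * (bstar * nx ^+ 2).
  by apply: s_g_gain; rewrite ?sqrtr_ge0.
have : (s - u) * (bstar * nx ^+ 2) <= (s - u) * qform G v v.
  by rewrite ler_wpM2l // subr_ge0; apply: s_g_ge; rewrite ?sqrtr_ge0.
have -> : s * qform G v v = u * qform G v v + (s - u) * qform G v v by ring.
rewrite /Mfun; lra.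
Qed.

End ClosedLoop.

(* dB/dt + gamma B along the closed loop, once the update laws are substituted. *)
Lemma barrier_rate_ge0 (R : realFieldType)
    (gam gth gla hv te le mh nh mub nub A B D Mf F0 P1u e12 dmh dnh : R) :
  0 < gam -> 0 < gth -> 0 < gla -> 0 <= te <= mub -> 0 <= le <= nub ->
  dmh = - gam * mh + gth * A -> dnh = - gam * nh + gla * B ->
  0 <= Mf + F0 - e12 + gam * (hv - mub ^+ 2 / (2 * gth) - nub ^+ 2 / (2 * gla)) + P1u ->
  Mf + F0 + P1u - e12 - (te - mh) * A - (le - nh) * B <= D ->
  0 <= gam * (hv - (te - mh) ^+ 2 / (2 * gth) - (le - nh) ^+ 2 / (2 * gla))
       + (D - (- (2 * (te - mh) * dmh) / (2 * gth))
            - (- (2 * (le - nh) * dnh) / (2 * gla))).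
Proof.
move=> gam_gt0 gth_gt0 gla_gt0 te_in le_in -> -> Psi_ge D_ge.
have -> : gam * (hv - (te - mh) ^+ 2 / (2 * gth) - (le - nh) ^+ 2 / (2 * gla))
    + (D - (- (2 * (te - mh) * (- gam * mh + gth * A)) / (2 * gth))
         - (- (2 * (le - nh) * (- gam * nh + gla * B)) / (2 * gla))) =
    (D - (Mf + F0 + P1u - e12 - (te - mh) * A - (le - nh) * B))
    + (Mf + F0 - e12 + gam * (hv - mub ^+ 2 / (2 * gth) - nub ^+ 2 / (2 * gla)) + P1u)
    + gam / (2 * gth) * (mub ^+ 2 - te ^+ 2 + mh ^+ 2)
    + gam / (2 * gla) * (nub ^+ 2 - le ^+ 2 + nh ^+ 2).
  by field; rewrite !gt_eqF.
have slack_ge0 (k a b c : R) : 0 < k -> 0 <= a <= b ->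
    0 <= gam / (2 * k) * (b ^+ 2 - a ^+ 2 + c ^+ 2).
  move=> k_gt0 /andP [a_ge0 a_le]; rewrite mulr_ge0 //; first by rewrite divr_ge0 ?mulr_ge0 // ltW.
  have : 0 <= (b - a) * (b + a) by rewrite mulr_ge0 ?subr_ge0 ?addr_ge0 // (le_trans a_ge0 a_le).
  by have := sqr_ge0 c; lra.
have := slack_ge0 _ _ _ mh gth_gt0 te_in; have := slack_ge0 _ _ _ nh gla_gt0 le_in.
lra.
Qed.

Section Trajectory.
Variables (R : realType) (m n : nat) (p : 'I_n -> nat) (q : 'I_n -> 'I_n -> nat).
Local Unset Implicit Arguments.
Variables (phi : forall i : 'I_n, 'cV[R]_(m + n) -> 'I_(p i) -> R)
  (th th0 : forall i : 'I_n, 'I_(p i) -> R).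
Variables (psi : forall i j : 'I_n, 'cV[R]_(m + n) -> 'I_(q i j) -> R)
  (lam lam0 : forall i j : 'I_n, 'I_(q i j) -> R).
Local Set Implicit Arguments.
Variables (f fu fu_lo fu_hi : 'cV[R]_(m + n) -> 'cV[R]_(m + n))
  (g : 'cV[R]_(m + n) -> 'M[R]_n) (h : 'cV[R]_(m + n) -> R).
Variables (bstar eps1 eps2 gam gth gla mub nub : R) (u0 : 'cV[R]_(m + n) -> R).
Variables (x : R -> 'cV[R]_(m + n)) (muh nuh : R -> R).

Let G y := g y + g_lambda psi lam y.
Let Psi0 y := Mfun h f fu_lo fu_hi y + (grad2 h y *m f_theta phi th0 y) 0 0
  - (eps1 + eps2) + gam * (h y - mub ^+ 2 / (2 * gth) - nub ^+ 2 / (2 * gla)).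
Let Psi1 y := (grad2 h y *m (g y + g_lambda psi lam0 y) *m (grad2 h y)^T) 0 0.
Let ctrl t := s_g bstar eps1 eps2 (muh t) (nuh t) (norm_Omega_phi phi (x t))
  (norm_Omega_psi psi (x t)) (enorm (grad2 h (x t))) (u0 (x t)).

Hypotheses (n_gt0 : (0 < n)%N) (h_diff : forall y, differentiable h y)
  (fu_in : forall y j, fu_lo y j 0 <= fu y j 0 <= fu_hi y j 0).
Hypotheses (theta_err_le : theta_err th th0 <= mub)
  (lambda_err_le : lambda_err lam lam0 <= nub).
Hypothesis G_safe : forall y, 0 <= h y ->
  posdef (sym_part (G y)) /\ bstar <= sigma_min (sym_part (G y)).
Hypotheses (bstar_gt0 : 0 < bstar) (gam_gt0 : 0 < gam) (eps1_gt0 : 0 < eps1)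
  (eps2_gt0 : 0 < eps2) (gth_gt0 : 0 < gth) (gla_gt0 : 0 < gla).
Hypothesis u0_safe : forall y, 0 <= h y -> 0 <= Psi0 y + Psi1 y * u0 y.
Hypotheses (muh_cont : {within `[0, +oo[, continuous muh})
  (nuh_cont : {within `[0, +oo[, continuous nuh}).
Hypothesis muh_der : forall t, 0 < t -> derivable muh t 1 /\
  'D_1 muh t = - gam * muh t + gth * enorm (grad2 h (x t)) * norm_Omega_phi phi (x t).
Hypothesis nuh_der : forall t, 0 < t -> derivable nuh t 1 /\
  'D_1 nuh t = - gam * nuh t
    + gla * enorm (grad2 h (x t)) ^+ 2 * `|u0 (x t)| * norm_Omega_psi psi (x t).
Hypotheses (muh0_gt0 : 0 < muh 0) (nuh0_gt0 : 0 < nuh 0).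
Hypothesis init : (muh 0 ^+ 2 + mub ^+ 2) / (2 * gth)
  + (nuh 0 ^+ 2 + nub ^+ 2) / (2 * gla) <= h (x 0).
Hypothesis x_cont : {within `[0, +oo[, continuous x}.
Hypothesis x_der : forall t, 0 < t -> derivable x t 1 /\
  'D_1 x t = f (x t) + fu (x t) + col_mx 0 (f_theta phi th (x t)
    + G (x t) *m (ctrl t *: (grad2 h (x t))^T)).

Let muh_gt0 : forall s, 0 <= s -> 0 < muh s.
Proof.
apply: (gt0_of_derive_ge (gam := gam)) muh_cont muh0_gt0 _ => t t_gt0.
have [muh_d ->] := muh_der t_gt0; split => //.
by rewrite lerDl !mulr_ge0 ?enorm_ge0 ?(ltW gth_gt0) //; exact: sqrtr_ge0.
Qed.

Let nuh_gt0 : forall s, 0 <= s -> 0 < nuh s.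
Proof.
apply: (gt0_of_derive_ge (gam := gam)) nuh_cont nuh0_gt0 _ => t t_gt0.
have [nuh_d ->] := nuh_der t_gt0; split => //.
by rewrite lerDl !mulr_ge0 ?sqr_ge0 ?(ltW gla_gt0) //; exact: sqrtr_ge0.
Qed.

Definition barrier s := h (x s) - (theta_err th th0 - muh s) ^+ 2 / (2 * gth)
  - (lambda_err lam lam0 - nuh s) ^+ 2 / (2 * gla).

Let hx_cont : {within `[0, +oo[, continuous (fun s => h (x s))}.
Proof. exact: continuous_differentiable_comp. Qed.

Let barrier_cont : {within `[0, +oo[, continuous barrier}.
Proof. exact: continuous_sub_sqr_penalties hx_cont muh_cont nuh_cont. Qed.

Let barrier_rate s : 0 < s -> 0 <= h (x s) ->
  exists2 dB, is_derive s 1 barrier dB & 0 <= gam * barrier s + dB.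
Proof.
move=> s_gt0 hxs_ge0; have [x_d x_eq] := x_der s_gt0.
have [muh_d muh_eq] := muh_der s_gt0; have [nuh_d nuh_eq] := nuh_der s_gt0.
have [G_pd G_sigma] := G_safe hxs_ge0.
have muh_term := is_derive_sqr_sub_div (theta_err th th0) (2 * gth)
  (derivableP muh_d).
have nuh_term := is_derive_sqr_sub_div (lambda_err lam lam0) (2 * gla)
  (derivableP nuh_d).
eexists; first exact: is_deriveB (is_deriveB (is_derive_comp_grad (h_diff _) x_d)
  muh_term) nuh_term.
rewrite /barrier; apply: (barrier_rate_ge0 gam_gt0 gth_gt0 gla_gt0 _ _ _ _
    (u0_safe hxs_ge0) (A := enorm (grad2 h (x s)) * norm_Omega_phi phi (x s))
    (B := enorm (grad2 h (x s)) ^+ 2 * `|u0 (x s)| * norm_Omega_psi psi (x s))).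
- by rewrite theta_err_le andbT; exact: sqrtr_ge0.
- by rewrite lambda_err_le andbT; exact: sqrtr_ge0.
- by rewrite muh_eq mulrA.
- by rewrite nuh_eq !mulrA.
rewrite x_eq; apply: grad_closed_loop_ge => //; apply: ltW.
  exact: muh_gt0 (ltW s_gt0).
exact: nuh_gt0 (ltW s_gt0).
Qed.

Let theta_err_ge0 : 0 <= theta_err th th0.
Proof. exact: sqrtr_ge0. Qed.

Let barrier0_ge : theta_err th th0 * muh 0 / gth <= barrier 0.
Proof.
rewrite /barrier /=; set te := theta_err th th0; set le := lambda_err lam lam0.
have le_ge0 : 0 <= le by exact: sqrtr_ge0.
have te_sq : te ^+ 2 <= mub ^+ 2.
  by rewrite ler_sqr ?nnegrE ?(le_trans theta_err_ge0 theta_err_le).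
have le_sq : le ^+ 2 <= nub ^+ 2.
  by rewrite ler_sqr ?nnegrE ?(le_trans le_ge0 lambda_err_le).
have mu_part : (te - muh 0) ^+ 2 / (2 * gth)
    <= (muh 0 ^+ 2 + mub ^+ 2) / (2 * gth) - te * muh 0 / gth.
  have -> : (muh 0 ^+ 2 + mub ^+ 2) / (2 * gth) - te * muh 0 / gth =
      (muh 0 ^+ 2 + mub ^+ 2 - 2 * te * muh 0) / (2 * gth).
    by field; rewrite gt_eqF.
  by rewrite ler_pM2r ?invr_gt0 ?mulr_gt0 //; lra.
have nu_part : (le - nuh 0) ^+ 2 / (2 * gla) <= (nuh 0 ^+ 2 + nub ^+ 2) / (2 * gla).
  rewrite ler_pM2r ?invr_gt0 ?mulr_gt0 //.
  by have := mulr_ge0 le_ge0 (ltW nuh0_gt0); lra.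
by apply: le_trans _ (lerB (lerB init (lexx _)) (lexx _)); lra.
Qed.

Lemma trajectory_safe : forall t, 0 <= t -> 0 <= h (x t).
Proof.
apply: ge0_of_first_exit hx_cont _ _ => [|t0 t0_gt0 safe_before ht0_le0].
  apply: lt_le_trans init; have : 0 < (muh 0 ^+ 2 + mub ^+ 2) / (2 * gth).
    rewrite divr_gt0 ?mulr_gt0 //.
    by have := exprn_gt0 2 muh0_gt0; have := sqr_ge0 mub; lra.
  have : 0 <= (nuh 0 ^+ 2 + nub ^+ 2) / (2 * gla).
    by rewrite divr_ge0 ?addr_ge0 ?sqr_ge0 ?mulr_ge0 // ltW.
  lra.
have sub_t0 : `[0, t0] `<=` `[0, +oo[ by move=> z; rewrite /= !in_itv /= => /andP [->].
have rate s : 0 < s < t0 -> exists2 dB, is_derive s 1 barrier dB & 0 <= gam * barrier s + dB.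
  move=> /andP [s_gt0 s_lt]; apply: barrier_rate => //.
  by apply: safe_before; rewrite s_lt (ltW s_gt0).
have := expR_mul_ge_of_derive (ltW t0_gt0) (continuous_subspaceW sub_t0 barrier_cont) rate.
have := barrier0_ge; set te := theta_err th th0; set e := expR (gam * t0).
set P := (te - muh t0) ^+ 2 / (2 * gth).
have e_gt0 : 0 < e by exact: expR_gt0.
have P_ge0 : 0 <= P by rewrite divr_ge0 ?sqr_ge0 ?mulr_ge0 // ltW.
have : e * barrier t0 <= - (e * P).
  rewrite -mulrN ler_wpM2l ?(ltW e_gt0) // /barrier -/te -/P.
  have : 0 <= (lambda_err lam lam0 - nuh t0) ^+ 2 / (2 * gla).
    by rewrite divr_ge0 ?sqr_ge0 ?mulr_ge0 // ltW.
  lra.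
suff : 0 < te * muh 0 / gth + e * P by lra.
have [te_eq|te_neq] := eqVneq te (muh t0).
  have : 0 < te * muh 0 / gth.
    by rewrite divr_gt0 // mulr_gt0 // te_eq; exact: muh_gt0 (ltW t0_gt0).
  by have := mulr_ge0 (ltW e_gt0) P_ge0; lra.
have : 0 < e * P.
  apply: mulr_gt0 => //; apply: divr_gt0; last by rewrite mulr_gt0.
  by rewrite lt0r sqr_ge0 andbT sqrf_eq0 subr_eq0.
have : 0 <= te * muh 0 / gth.
  by rewrite divr_ge0 ?mulr_ge0 ?(ltW muh0_gt0) ?(ltW gth_gt0).
lra.
Qed.

End Trajectory.

Theorem theorem2 (R : realType) (m n : nat)
  (p : 'I_n -> nat) (q : 'I_n -> 'I_n -> nat)
  (f fu fu_lo fu_hi : 'cV[R]_(m + n) -> 'cV[R]_(m + n))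
  (phi : forall i : 'I_n, 'cV[R]_(m + n) -> 'I_(p i) -> R)
  (th th_lo th_hi th0 : forall i : 'I_n, 'I_(p i) -> R)
  (g : 'cV[R]_(m + n) -> 'M[R]_n)
  (psi : forall i j : 'I_n, 'cV[R]_(m + n) -> 'I_(q i j) -> R)
  (lam lam_lo lam_hi lam0 : forall i j : 'I_n, 'I_(q i j) -> R)
  (h : 'cV[R]_(m + n) -> R)
  (X : set 'cV[R]_(m + n)) (bstar : R)
  (gam eps1 eps2 gth gla : R)
  (u0 : 'cV[R]_(m + n) -> R)
  (x : R -> 'cV[R]_(m + n)) (muh nuh : R -> R) :
  (0 < n)%N ->
  (* standing assumptions on the system *)
  lipschitz_eucl f -> lipschitz_eucl fu ->
  (forall y, differentiable h y) ->
  (forall j, continuous (fun y => grad h y 0 j)) ->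
  (* Assumption A *)
  (forall y j, fu_lo y j 0 <= fu y j 0 <= fu_hi y j 0) ->
  (* Assumption B' *)
  (forall i k, th_lo i k <= th i k <= th_hi i k) ->
  (forall i j k, lam_lo i j k <= lam i j k <= lam_hi i j k) ->
  (* nominal values *)
  (forall i k, th_lo i k <= th0 i k <= th_hi i k) ->
  (forall i j k, lam_lo i j k <= lam0 i j k <= lam_hi i j k) ->
  (* Assumption C' *)
  compact X -> safe_set h `<=` X -> 0 < bstar ->
  (forall y, X y ->
     posdef (sym_part (g y + g_lambda psi lam y)) /\
     bstar <= sigma_min (sym_part (g y + g_lambda psi lam y))) ->
  (* (ii) *)
  0 < gam -> 0 < eps1 -> 0 < eps2 -> 0 < gth -> 0 < gla ->
  let Psi0 := fun y =>
    Mfun h f fu_lo fu_hi y + (grad2 h y *m f_theta phi th0 y) 0 0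
    - (eps1 + eps2)
    + gam * (h y - mu_bar th_lo th_hi th0 ^+ 2 / (2%:R * gth)
                 - nu_bar lam_lo lam_hi lam0 ^+ 2 / (2%:R * gla)) in
  let Psi1 := fun y =>
    (grad2 h y *m (g y + g_lambda psi lam0 y) *m (grad2 h y)^T) 0 0 in
  (forall y, safe_set h y -> exists v : R, 0 <= Psi0 y + Psi1 y * v) ->
  (* (iii) *)
  lipschitz_eucl_scalar u0 ->
  (forall y, safe_set h y -> 0 <= Psi0 y + Psi1 y * u0 y) ->
  {within `[0, +oo[, continuous muh} ->
  {within `[0, +oo[, continuous nuh} ->
  (forall t, 0 < t -> derivable muh t 1 /\
     'D_1 muh t = - gam * muh t
        + gth * enorm (grad2 h (x t)) * norm_Omega_phi phi (x t)) ->
  (forall t, 0 < t -> derivable nuh t 1 /\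
     'D_1 nuh t = - gam * nuh t
        + gla * enorm (grad2 h (x t)) ^+ 2 * `|u0 (x t)|
              * norm_Omega_psi psi (x t)) ->
  0 < muh 0 -> 0 < nuh 0 ->
  (* (iv) *)
  (muh 0 ^+ 2 + mu_bar th_lo th_hi th0 ^+ 2) / (2%:R * gth)
    + (nuh 0 ^+ 2 + nu_bar lam_lo lam_hi lam0 ^+ 2) / (2%:R * gla) <= h (x 0) ->
  (* closed loop with u = s_g(u0) h_{x2}^T *)
  let u := fun t =>
    s_g bstar eps1 eps2 (muh t) (nuh t) (norm_Omega_phi phi (x t))
        (norm_Omega_psi psi (x t)) (enorm (grad2 h (x t))) (u0 (x t))
      *: (grad2 h (x t))^T in
  {within `[0, +oo[, continuous x} ->
  (forall t, 0 < t -> derivable x t 1 /\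
     'D_1 x t = f (x t) + fu (x t)
       + col_mx 0 (f_theta phi th (x t)
                   + (g (x t) + g_lambda psi lam (x t)) *m u t)) ->
  forall t, 0 < t -> 0 <= h (x t).
Proof.
(* Lipschitz continuity, compactness of X and non-emptiness of K_BF only serve the existence
   of the closed-loop solution, which is given here. *)
move=> n_gt0 _ _ h_diff _ fu_in th_in lam_in th0_in lam0_in _ safe_X bstar_gt0 G_X
  gam_gt0 eps1_gt0 eps2_gt0 gth_gt0 gla_gt0 Psi0 Psi1 _ _ u0_safe muh_cont nuh_cont
  muh_der nuh_der muh0_gt0 nuh0_gt0 init u x_cont x_der t t_gt0.
apply: (trajectory_safe n_gt0 h_diff fu_in (theta_err_le_mu_bar th_in th0_in)
  (lambda_err_le_nu_bar lam_in lam0_in) (fun y hy => G_X y (safe_X y hy)) bstar_gt0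
  gam_gt0 eps1_gt0 eps2_gt0 gth_gt0 gla_gt0 u0_safe muh_cont nuh_cont muh_der nuh_der
  muh0_gt0 nuh0_gt0 init x_cont x_der (ltW t_gt0)).
Qed.
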